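(* For every finite graph $G$, $\mathrm{lw}_{\chi(G)}(G)\leq \chi(G)$, where $\chi(G)$ is the chromatic number of $G$.
   Context: All graphs are finite, simple and undirected. For vertices $u,v$ of a connected graph, the interval $I(u,v)$ is the set of vertices lying on some shortest $(u,v)$-path. A set $S$ of vertices is (geodesically) convex if $I(u,v)\subseteq S$ for all $u,v\in S$. A graph $M$ is median if it is connected and for any three vertices $u,v,w$ we have $|I(u,v)\cap I(v,w)\cap I(w,u)|=1$. A median decomposition of a graph $G$ is a pair $(M,\mathcal{X})$ where $M$ is a median graph and $\mathcal{X}=(X_a)_{a\in V(M)}$ is a family of subsets of $V(G)$ (bags) such that (M1) for every edge $uv\in E(G)$ there is $a\in V(M)$ with $u,v\in X_a$, and (M2) for every $v\in V(G)$ the set $\{a\in V(M): v\in X_a\}$ is non-empty and convex in $M$. Its width is $\max_{a\in V(M)}|X_a|$. A $k$-lattice is a Cartesian product of $k$ (finite) paths. The lattice dimension of a graph $M$ is the least $k$ such that $M$ admits an isometric (distance-preserving) embedding into a $k$-lattice. For $i\geq1$, an $i$-lattice decomposition of $G$ is a median decomposition $(M,\mathcal{X})$ of $G$ with $M$ of lattice dimension at most $i$, and the $i$-latticewidth $\mathrm{lw}_i(G)$ is the minimum width of an $i$-lattice decomposition of $G$. *)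

From mathcomp Require Import all_boot.
Set Implicit Arguments. Unset Strict Implicit. Unset Printing Implicit Defensive.

Section Graphs.
Variable A : finType.
Variable f : rel A.

(* a walk from u to v: the sequence u :: p is an f-path ending at v; its length is size p *)
Definition walk (u v : A) (p : seq A) : bool := path f u p && (last u p == v).

Definition shortest (u v : A) (p : seq A) : Prop :=
  walk u v p /\ forall q, walk u v q -> size p <= size q.

Definition is_dist (u v : A) (n : nat) : Prop :=
  exists p, shortest u v p /\ size p = n.

Definition in_interval (u v w : A) : Prop :=
  exists p, shortest u v p /\ w \in u :: p.

Definition convex (S : {set A}) : Prop :=
  forall u v w, u \in S -> v \in S -> in_interval u v w -> w \in S.

Definition connected : Prop := forall u v, exists p, walk u v p.

Definition simple_graph : Prop := symmetric f /\ irreflexive f.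

Definition median : Prop :=
  simple_graph /\ connected /\
  forall u v w, exists! x, in_interval u v x /\ in_interval v w x /\ in_interval w u x.
End Graphs.

Definition colorable (T : finType) (e : rel T) (c : nat) : Prop :=
  exists col : T -> 'I_c, forall u v, e u v -> col u != col v.

Definition chromatic_number (T : finType) (e : rel T) (k : nat) : Prop :=
  colorable e k /\ forall c, colorable e c -> k <= c.

(* the k-lattice P_{n 0} □ ... □ P_{n (k-1)}: vertices are tuples of coordinates,
   adjacent iff they differ in exactly one coordinate, by exactly 1 *)
Definition lattice_vtx (k : nat) (n : 'I_k -> nat) : finType :=
  {dffun forall j : 'I_k, 'I_(n j)}.

Definition lattice_rel (k : nat) (n : 'I_k -> nat) : rel (lattice_vtx n) :=
  fun x y => [exists j, (((x j).+1 == y j :> nat) || ((y j).+1 == x j :> nat))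
                         && [forall j', (j' != j) ==> (x j' == y j')]].

Definition isometric (A B : finType) (fA : rel A) (fB : rel B) (phi : A -> B) : Prop :=
  forall u v n, is_dist fA u v n <-> is_dist fB (phi u) (phi v) n.

Definition lattice_dim_le (A : finType) (fA : rel A) (i : nat) : Prop :=
  exists k, k <= i /\ exists (n : 'I_k -> nat) (phi : A -> lattice_vtx n),
    isometric fA (@lattice_rel k n) phi.

Definition median_decomposition (T : finType) (e : rel T)
    (A : finType) (fM : rel A) (X : A -> {set T}) : Prop :=
  median fM /\
  (forall u v, e u v -> exists a, (u \in X a) && (v \in X a)) /\
  (forall v, (exists a, v \in X a) /\ convex fM [set a | v \in X a]).

Definition width_le (T A : finType) (X : A -> {set T}) (w : nat) : Prop :=
  forall a, #|X a| <= w.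

Definition lw_le (T : finType) (e : rel T) (i w : nat) : Prop :=
  exists (A : finType) (fM : rel A) (X : A -> {set T}),
    median_decomposition e fM X /\ lattice_dim_le fM i /\ width_le X w.

(* Colour G properly with k = chi(G) colours and take for M the k-lattice whose
   j-th factor path indexes the j-th colour class.  The bag at a lattice point x
   holds, for each colour j, the vertex of class j whose rank is x_j; it thus has
   at most one vertex per colour, i.e. at most k vertices.  The bags containing a
   vertex v form the hyperplane x_(col v) = rank v, which is convex because the
   lattice distance is the l1 distance of coordinates, and two adjacent vertices
   have distinct colours, so some point fixes both of their coordinates.  The
   lattice itself is median: the median of three points is taken coordinatewise. *)

From mathcomp Require Import all_boot zify.
Set Implicit Arguments. Unset Strict Implicit. Unset Printing Implicit Defensive.

Definition natdist (a b : nat) : nat := (a - b) + (b - a).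

Lemma natdist_triangle a b c : natdist a c <= natdist a b + natdist b c.
Proof. rewrite /natdist; lia. Qed.

Lemma natdistnn a : natdist a a = 0.
Proof. by rewrite /natdist subnn. Qed.

Lemma natdist_eq0 a b : natdist a b = 0 -> a = b.
Proof. rewrite /natdist; lia. Qed.

Lemma natdist_succ a b : (a.+1 == b) || (b.+1 == a) -> natdist a b = 1.
Proof. by case/orP=> /eqP <-; rewrite /natdist; lia. Qed.

Definition natmedian (a b c : nat) : nat := maxn (minn a b) (minn (maxn a b) c).

Definition natbetween (a b c : nat) : bool := natdist a c + natdist c b == natdist a b.

Lemma natbetweenE a b m : natbetween a b m = (minn a b <= m <= maxn a b).
Proof. by rewrite /natbetween /natdist; apply/eqP/idP; lia. Qed.

Lemma natmedianP a b c m :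
  [&& natbetween a b m, natbetween b c m & natbetween c a m] = (m == natmedian a b c).
Proof.
rewrite !natbetweenE /natmedian.
case: (leqP a b) => ?; case: (leqP b c) => ?; case: (leqP a c) => ?.
all: by apply/idP/eqP; lia.
Qed.

Lemma natmedian_le_max a b c : natmedian a b c <= maxn a b.
Proof. by rewrite geq_max geq_minl (leq_trans (geq_minl a b)) ?leq_maxl. Qed.

Lemma natbetweenxx a c : natbetween a a c -> c = a.
Proof. by rewrite /natbetween /natdist => /eqP; lia. Qed.

Lemma sum_eq_leqP (I : finType) (F G : I -> nat) :
  (forall i, F i <= G i) ->
  reflect (forall i, F i = G i) (\sum_i F i == \sum_i G i).
Proof.
move=> leFG; rewrite (leqif_sum (fun i _ => leqif_eq (leFG i))).2.
by apply: (iffP forallP) => eqFG i; apply/eqP; apply: eqFG.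
Qed.

Definition natstep (a b : nat) : nat := if a < b then a.+1 else a.-1.

Lemma natstep_leq_max a b : natstep a b <= maxn a b.
Proof. rewrite /natstep; case: ltnP; lia. Qed.

Lemma natstep_adj a b : a != b -> (a.+1 == natstep a b) || ((natstep a b).+1 == a).
Proof. rewrite /natstep; case: ltnP; lia. Qed.

Lemma natdist_natstep a b : a != b -> (natdist (natstep a b) b).+1 = natdist a b.
Proof. rewrite /natstep /natdist; case: ltnP; lia. Qed.

Section Lattice.
Variables (k : nat) (n : 'I_k -> nat).
Local Notation L := (lattice_vtx n).
Local Notation adj := (@lattice_rel k n).
Implicit Types (x y z w : L) (p : seq L).

Definition lattice_dist x y : nat := \sum_(j < k) natdist (x j) (y j).

Lemma lattice_vtxP x y : (forall j, x j = y j :> nat) -> x = y.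
Proof. by move=> eqxy; apply/ffunP => j; apply/val_inj/eqxy. Qed.

Lemma natdist_le_lattice_dist x y j : natdist (x j) (y j) <= lattice_dist x y.
Proof. by rewrite /lattice_dist (bigD1 j) //= leq_addr. Qed.

Lemma lattice_dist_triangle x y z :
  lattice_dist x z <= lattice_dist x y + lattice_dist y z.
Proof.
by rewrite /lattice_dist -big_split leq_sum // => j _; apply: natdist_triangle.
Qed.

Lemma lattice_distxx x : lattice_dist x x = 0.
Proof. by rewrite /lattice_dist big1 // => j _; rewrite natdistnn. Qed.

Lemma lattice_dist_eq0 x y : lattice_dist x y = 0 -> x = y.
Proof.
move=> dxy0; apply: lattice_vtxP => j; apply: natdist_eq0.
by apply/eqP; rewrite -leqn0 -dxy0 natdist_le_lattice_dist.
Qed.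

Lemma lattice_rel_dist x y : adj x y -> lattice_dist x y = 1.
Proof.
case/existsP=> j /andP[step_j /forallP same].
rewrite /lattice_dist (bigD1 j) //= big1 => [|i neq_ij].
  by rewrite addn0 natdist_succ.
by move/implyP/(_ neq_ij)/eqP: (same i) => ->; rewrite natdistnn.
Qed.

Lemma lattice_path_dist x p : path adj x p -> lattice_dist x (last x p) <= size p.
Proof.
elim: p x => [|y p IHp] x /=; first by rewrite lattice_distxx.
case/andP=> adj_xy yp; apply: leq_trans (lattice_dist_triangle x y _) _.
by rewrite lattice_rel_dist // add1n ltnS IHp.
Qed.

Lemma lattice_path_mem_dist x p w : path adj x p -> w \in x :: p ->
  lattice_dist x w + lattice_dist w (last x p) <= size p.
Proof.
elim: p x => [|y p IHp] x /=; first by rewrite inE => _ /eqP ->; rewrite lattice_distxx.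
case/andP=> adj_xy yp; rewrite inE => /predU1P[->|wp].
  by rewrite lattice_distxx add0n (@lattice_path_dist x (y :: p)) //= adj_xy.
apply: leq_trans (leq_add (lattice_dist_triangle x y w) (leqnn _)) _.
by rewrite lattice_rel_dist // -addnA add1n ltnS IHp.
Qed.

Definition lattice_set x j (c : nat) : L :=
  @finfun _ (fun i => 'I_(n i)) (fun i => insubd (x i) (if i == j then c else x i)).

Lemma lattice_setE x j c i : c < n j ->
  lattice_set x j c i = (if i == j then c else x i) :> nat.
Proof.
move=> ltcn; rewrite ffunE val_insubd.
by case: eqP => [->|_]; rewrite ?ltcn ?ltn_ord.
Qed.

Lemma lattice_step_closer x y : x != y ->
  exists2 x', adj x x' & (lattice_dist x' y).+1 = lattice_dist x y.
Proof.
move=> neq_xy.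
have [j neq_j] : exists j, x j != y j :> nat.
  apply/existsP; apply: contraR neq_xy => /existsPn same.
  by apply/eqP/lattice_vtxP => j; apply/eqP; rewrite -[_ == _]negbK same.
have lt_step : natstep (x j) (y j) < n j.
  by rewrite (leq_ltn_trans (natstep_leq_max _ _)) // gtn_max !ltn_ord.
pose x' := lattice_set x j (natstep (x j) (y j)).
have x'E i : x' i = (if i == j then natstep (x j) (y j) else x i) :> nat.
  exact: lattice_setE.
exists x'.
  apply/existsP; exists j; rewrite x'E eqxx natstep_adj //=.
  by apply/forallP => i; apply/implyP => neq_ij; rewrite -val_eqE /= x'E (negbTE neq_ij).
rewrite /lattice_dist (bigD1 j) //= [in RHS](bigD1 j) //= x'E eqxx.
rewrite -addSn natdist_natstep //.
by congr (_ + _); apply: eq_bigr => i neq_ij; rewrite x'E (negbTE neq_ij).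
Qed.

Lemma lattice_geodesic x y : exists p, walk adj x y p /\ size p = lattice_dist x y.
Proof.
move Edist : (lattice_dist x y) => d; elim: d x Edist => [|d IHd] x Edist.
  by exists [::]; rewrite /walk /= (lattice_dist_eq0 Edist) eqxx.
have [eq_xy|neq_xy] := eqVneq x y; first by rewrite eq_xy lattice_distxx in Edist.
have [x' adj_xx' Edist'] := lattice_step_closer neq_xy.
have [p [x'p size_p]] := IHd x' ltac:(by apply/eqP; rewrite -eqSS Edist' Edist).
by exists (x' :: p); rewrite /walk /= adj_xx' size_p.
Qed.

Lemma lattice_shortestE x y p :
  shortest adj x y p <-> walk adj x y p /\ size p = lattice_dist x y.
Proof.
have walk_dist q : walk adj x y q -> lattice_dist x y <= size q.
  by case/andP=> xq /eqP <-; apply: lattice_path_dist.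
split=> [[xyp min_p]|[xyp size_p]]; last by split=> // q /walk_dist; rewrite size_p.
have [q [xyq size_q]] := lattice_geodesic x y.
by split=> //; apply/eqP; rewrite eqn_leq -{1}size_q min_p // walk_dist.
Qed.

Lemma lattice_interval_distE x y w :
  in_interval adj x y w <-> lattice_dist x w + lattice_dist w y = lattice_dist x y.
Proof.
split=> [[p [/lattice_shortestE [/andP[xp /eqP last_p] size_p] wp]]|between].
  apply/eqP; rewrite eqn_leq lattice_dist_triangle andbT -size_p -last_p.
  exact: lattice_path_mem_dist.
have [p1 [/andP[xp1 /eqP last_p1] size_p1]] := lattice_geodesic x w.
have [p2 [/andP[wp2 /eqP last_p2] size_p2]] := lattice_geodesic w y.
exists (p1 ++ p2); split; last by rewrite -cat_cons mem_cat -last_p1 mem_last.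
apply/lattice_shortestE; rewrite size_cat size_p1 size_p2 between; split=> //.
by rewrite /walk cat_path last_cat last_p1 xp1 wp2 last_p2 eqxx.
Qed.

Lemma lattice_intervalE x y w :
  in_interval adj x y w <-> forall j, natbetween (x j) (y j) (w j).
Proof.
rewrite lattice_interval_distE /lattice_dist -big_split.
have le_dist j : natdist (x j) (y j) <= natdist (x j) (w j) + natdist (w j) (y j).
  exact: natdist_triangle.
split=> [/esym/eqP/(sum_eq_leqP le_dist) eq_j j|between].
  by rewrite /natbetween eq_j.
by apply/esym/eqP/(sum_eq_leqP le_dist) => j; apply/esym/eqP/between.
Qed.

Lemma lattice_rel_sym : symmetric adj.
Proof.
suff imp x y : adj x y -> adj y x by move=> x y; apply/idP/idP; apply: imp.
case/existsP=> j /andP[step_j /forallP same]; apply/existsP; exists j.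
rewrite orbC step_j; apply/forallP => i; apply/implyP => neq_ij.
by rewrite eq_sym (implyP (same i)).
Qed.

Lemma lattice_median : median adj.
Proof.
split; [split|split].
- exact: lattice_rel_sym.
- move=> x; apply/negbTE/existsP => -[j /andP[/natdist_succ]].
  by rewrite natdistnn.
- by move=> x y; have [p [xyp _]] := lattice_geodesic x y; exists p.
move=> x y z.
have lt_med j : natmedian (x j) (y j) (z j) < n j.
  by rewrite (leq_ltn_trans (natmedian_le_max _ _ _)) // gtn_max !ltn_ord.
pose m := [ffun j => Ordinal (lt_med j)] : L.
have m_between j : [&& natbetween (x j) (y j) (m j), natbetween (y j) (z j) (m j)
                      & natbetween (z j) (x j) (m j)].
  by rewrite natmedianP ffunE.
exists m; split.
  by split; [|split]; apply/lattice_intervalE => j; case/and3P: (m_between j).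
move=> w [/lattice_intervalE xy [/lattice_intervalE yz /lattice_intervalE zx]].
apply: lattice_vtxP => j; rewrite ffunE /=; apply/eqP.
by rewrite eq_sym -natmedianP xy yz zx.
Qed.

Lemma lattice_hyperplane_convex j c : convex adj [set x : L | x j == c :> nat].
Proof.
move=> x y w; rewrite !inE => /eqP xj /eqP yj /lattice_intervalE/(_ j).
by rewrite xj yj => /natbetweenxx ->.
Qed.

Lemma lattice_dim_le_lattice : lattice_dim_le adj k.
Proof. by exists k; split=> //; exists n, id. Qed.

End Lattice.

Section ColourClassLattice.
Variables (T : finType) (e : rel T) (k : nat) (col : T -> 'I_k).
Hypothesis col_proper : forall u v, e u v -> col u != col v.

Definition colour_class (j : 'I_k) : {set T} := [set u | col u == j].

Definition class_rank (v : T) : nat := index v (enum (colour_class (col v))).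

(* The extra value keeps every factor path, hence the lattice, non-empty even
   when some colour is unused. *)
Definition class_bound (j : 'I_k) : nat := #|colour_class j|.+1.

Local Notation L := (lattice_vtx class_bound).
Local Notation adj := (@lattice_rel k class_bound).

Definition colour_bag (x : L) : {set T} := [set v | x (col v) == class_rank v :> nat].

Lemma class_rank_lt v : class_rank v < class_bound (col v).
Proof. by rewrite ltnS cardE index_size. Qed.

Lemma class_rank_inj u v : col u = col v -> class_rank u = class_rank v -> u = v.
Proof.
rewrite /class_rank => same_col; rewrite same_col.
have mem w : col w = col v -> w \in enum (colour_class (col v)).
  by move=> col_w; rewrite mem_enum inE col_w.
by move=> eq_idx; rewrite -(nth_index u (mem u same_col)) eq_idx nth_index ?mem.
Qed.

Lemma colour_bag_card x : #|colour_bag x| <= k.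
Proof.
have col_inj : {in colour_bag x &, injective col}.
  move=> u v; rewrite !inE => /eqP xu /eqP xv same_col.
  by apply: class_rank_inj => //; rewrite -xu -xv same_col.
by rewrite -(card_in_imset col_inj) (leq_trans (max_card _)) ?card_ord.
Qed.

Lemma colour_bag_set x v : v \in colour_bag (lattice_set x (col v) (class_rank v)).
Proof. by rewrite inE lattice_setE ?class_rank_lt // eqxx. Qed.

Lemma colour_bag_set_other x u j c : col u != j -> c < class_bound j ->
  (u \in colour_bag (lattice_set x j c)) = (u \in colour_bag x).
Proof. by move=> neq_j lt_c; rewrite !inE lattice_setE // (negbTE neq_j). Qed.

Lemma colour_bag_convex v : convex adj [set x | v \in colour_bag x].
Proof.
have -> : [set x | v \in colour_bag x] = [set x : L | x (col v) == class_rank v :> nat].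
  by apply/setP => x; rewrite !inE.
exact: lattice_hyperplane_convex.
Qed.

Definition lattice_origin : L := [ffun j => ord0].

Lemma colour_bag_decomposition : median_decomposition e adj colour_bag.
Proof.
split; [exact: lattice_median | split].
  move=> u v uv; exists (lattice_set (lattice_set lattice_origin (col u) (class_rank u))
                                     (col v) (class_rank v)).
  rewrite colour_bag_set colour_bag_set_other ?colour_bag_set ?class_rank_lt //.
  exact: col_proper.
move=> v; split; last exact: colour_bag_convex.
by exists (lattice_set lattice_origin (col v) (class_rank v)); apply: colour_bag_set.
Qed.

End ColourClassLattice.

Lemma colorable_lw_le (T : finType) (e : rel T) (k : nat) : colorable e k -> lw_le e k k.
Proof.
case=> col col_proper.
exists (lattice_vtx (class_bound col)), (lattice_rel (n := class_bound col)),
  (@colour_bag T k col).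
split; first exact: colour_bag_decomposition.
by split; [apply: lattice_dim_le_lattice | apply: colour_bag_card].
Qed.

Theorem mainTheorem1 (T : finType) (e : rel T) (Hsimple : simple_graph e)
  (k : nat) (Hchi : chromatic_number e k) :
  lw_le e k k.
Proof. by case: Hchi => /colorable_lw_le. Qed.
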